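(* Let $\Gamma\le\mathrm{Iso}(\mathbb{R}^{r,s})$ be a subgroup whose centralizer in $\mathrm{Iso}(\mathbb{R}^{r,s})$ has an open orbit in $\mathbb{R}^{r,s}$, and let $\Delta$ be the center of $\Gamma$. Then $U_\Delta\perp U_\Gamma$.
   Context: $\mathbb{R}^{r,s}$ denotes $\mathbb{R}^{n}$, $n=r+s$, with a nondegenerate symmetric bilinear form $\langle\cdot,\cdot\rangle$ of signature $(r,s)$; $\mathrm{Iso}(\mathbb{R}^{r,s})$ is its group of affine isometries, whose elements are written $\gamma=(I+A,v)\colon x\mapsto(I+A)x+v$. For a subset $\Lambda$ of $\Gamma$, $U_\Lambda=\sum_{(I+A,v)\in\Lambda}\operatorname{im}A$. Known facts (Wolf) for such $\Gamma$: every $(I+A,v)\in\Gamma$ satisfies $A^2=0$, $Av=0$, $\langle Ax,y\rangle=-\langle x,Ay\rangle$, $\ker A=(\operatorname{im}A)^\perp$, $\operatorname{im}A$ totally isotropic; for $\gamma_i=(I+A_i,v_i)\in\Gamma$ one has $A_1A_2A_3=0$ and $[\gamma_1,\gamma_2]=(I+2A_1A_2,2A_1v_2)$. *)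

From Stdlib Require Import Reals.
From mathcomp Require Import all_boot.

Unset Printing Implicit Defensive.
Local Open Scope R_scope.

Definition rvec (n : nat) := 'I_n -> R.
Definition rmat (n : nat) := 'I_n -> 'I_n -> R.

Definition vzero (n : nat) : rvec n := fun _ => 0.
Definition vadd (n : nat) (x y : rvec n) : rvec n := fun i => (x i + y i).
Definition vsub (n : nat) (x y : rvec n) : rvec n := fun i => (x i - y i).
Definition mulmv (n : nat) (M : rmat n) (x : rvec n) : rvec n :=
  fun i => \big[Rplus/0]_(j < n) (M i j * x j).

Definition sgn (r : nat) (i : nat) : R := if (i < r)%N then 1 else (-1).
Definition form (r s : nat) (x y : rvec (r + s)) : R :=
  \big[Rplus/0]_(i < r + s) (sgn r i * x i * y i).

Definition is_isometry (r s : nat) (f : rvec (r + s) -> rvec (r + s)) : Prop :=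
  exists (M : rmat (r + s)) (v : rvec (r + s)),
    (forall x y, form r s (mulmv (r + s) M x) (mulmv (r + s) M y) = form r s x y) /\
    (forall x, f x = vadd (r + s) (mulmv (r + s) M x) v).

(* For gamma = (I + A, v):  A x = (gamma x - gamma 0) - x *)
Definition Apart (r s : nat) (f : rvec (r + s) -> rvec (r + s)) (x : rvec (r + s))
  : rvec (r + s) := vsub (r + s) (vsub (r + s) (f x) (f (vzero (r + s)))) x.

Definition isoset (r s : nat) := (rvec (r + s) -> rvec (r + s)) -> Prop.

Definition is_subgroup (r s : nat) (G : isoset r s) : Prop :=
  (forall f, G f -> is_isometry r s f) /\
  G (fun x => x) /\
  (forall f g, G f -> G g -> G (fun x => f (g x))) /\
  (forall f, G f -> exists g, G g /\ (forall x, f (g x) = x) /\ (forall x, g (f x) = x)).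

Definition iso_centralizer (r s : nat) (G : isoset r s) : isoset r s :=
  fun g => is_isometry r s g /\ forall f, G f -> forall x, g (f x) = f (g x).

Definition iso_center (r s : nat) (G : isoset r s) : isoset r s :=
  fun g => G g /\ forall f, G f -> forall x, g (f x) = f (g x).

Definition iso_orbit (r s : nat) (H : isoset r s) (x0 : rvec (r + s)) : rvec (r + s) -> Prop :=
  fun y => exists g, H g /\ y = g x0.

Definition is_open_set (n : nat) (S : rvec n -> Prop) : Prop :=
  forall y, S y -> exists eps : R, (0 < eps) /\
    forall z, (\big[Rplus/0]_(i < n) ((z i - y i) * (z i - y i))) < (eps * eps) -> S z.

(* U_Lambda = sum of the subspaces im A, (I+A,v) in Lambda: the set of finite
   sums of vectors in these images *)
Inductive inU (r s : nat) (L : isoset r s) : rvec (r + s) -> Prop :=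
  | inU0 : inU r s L (vzero (r + s))
  | inUstep u f x : inU r s L u -> L f -> inU r s L (vadd (r + s) u (Apart r s f x)).

Definition form_perp (r s : nat) (U V : rvec (r + s) -> Prop) : Prop :=
  forall u v, U u -> V v -> form r s u v = 0.

(* For an isometry f with linear part I + A_f, the displacement y |-> f y - y
   is affine with linear part A_f.  If g centralizes Gamma, it conjugates the
   displacements of elements of Gamma by its linear part, so for f, h in Gamma
   the function y |-> <f y - y, h y - y> is constant on the orbit of x0 under
   the centralizer, hence on a ball.  Along a line x0 + t z this function is a
   quadratic polynomial in t with leading coefficient <A_f z, A_h z>, which
   therefore vanishes.  Polarizing gives <A_f x, A_h y> = -<A_f y, A_h x>; in
   particular im A_f is totally isotropic and A_f is skew.  For d central,
   A_d and A_g commute, and these two identities give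
   <w, A_g A_d x> = -<w, A_g A_d x>, so A_g A_d = 0 by nondegeneracy and
   <A_d x, A_g y> = -<A_g A_d x, y> = 0. *)
From HB Require Import structures.
From Stdlib Require Import Reals Lra FunctionalExtensionality.
From mathcomp Require Import all_boot.

Set Implicit Arguments.
Unset Strict Implicit.
Unset Printing Implicit Defensive.
Local Open Scope R_scope.

HB.instance Definition _ :=
  Monoid.isComLaw.Build R 0 Rplus
    (fun a b c => esym (Rplus_assoc a b c)) Rplus_comm Rplus_0_l.

(* [big_split] stated with [Rplus] itself rather than the monoid law, so that
   [ring] still recognizes the summands after rewriting. *)
Lemma big_Rplus_split (n : nat) (F G : 'I_n -> R) :
  \big[Rplus/0]_(i < n) (F i + G i) =
  \big[Rplus/0]_(i < n) F i + \big[Rplus/0]_(i < n) G i.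
Proof. exact: big_split. Qed.

Lemma big_Rmultr (n : nat) (a : R) (F : 'I_n -> R) :
  \big[Rplus/0]_(i < n) (a * F i) = a * \big[Rplus/0]_(i < n) F i.
Proof.
by rewrite (big_morph (fun x => a * x) (id1 := 0) (op1 := Rplus)) //;
  [move=> x y; rewrite Rmult_plus_distr_l | rewrite Rmult_0_r].
Qed.

Lemma big_Rplus_ge0 (n : nat) (F : 'I_n -> R) :
  (forall i, 0 <= F i) -> 0 <= \big[Rplus/0]_(i < n) F i.
Proof.
by move=> F_ge0; apply: (big_ind (fun x => 0 <= x)) => // [|x y]; lra.
Qed.

Definition scal (m : nat) (a : R) (x : rvec m) : rvec m := fun i => a * x i.

Section Form.
Variables r s : nat.
Local Notation n := (r + s)%N.
Local Notation form := (form r s).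

Lemma form_sym (x y : rvec n) : form x y = form y x.
Proof. by apply: eq_bigr => i _; ring. Qed.

Lemma form_addl (x y z : rvec n) : form (vadd n x y) z = form x z + form y z.
Proof. by rewrite /form -big_Rplus_split; apply: eq_bigr => i _; rewrite /vadd; ring. Qed.

Lemma form_addr (x y z : rvec n) : form z (vadd n x y) = form z x + form z y.
Proof. by rewrite form_sym form_addl !(form_sym z). Qed.

Lemma form_scall a (x z : rvec n) : form (scal a x) z = a * form x z.
Proof. by rewrite /form -big_Rmultr; apply: eq_bigr => i _; rewrite /scal; ring. Qed.

Lemma form_scalr a (x z : rvec n) : form z (scal a x) = a * form z x.
Proof. by rewrite form_sym form_scall form_sym. Qed.

Lemma form0l (z : rvec n) : form (vzero n) z = 0.
Proof. by rewrite /form big1 // => i _; rewrite /vzero; ring. Qed.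

Lemma form0r (z : rvec n) : form z (vzero n) = 0.
Proof. by rewrite form_sym form0l. Qed.

Lemma form_nondegenerate (y : rvec n) : (forall x, form x y = 0) -> y = vzero n.
Proof.
move=> y_perp; apply: functional_extensionality => i.
have := y_perp (fun j => if j == i then 1 else 0).
rewrite /form (eq_bigr (fun j => if j == i then sgn r j * y j else 0)); last first.
  by move=> j _; case: (j == i); ring.
rewrite -big_mkcond big_pred1_eq /vzero => /Rmult_integral [|//].
by rewrite /sgn; case: (i < r)%N; lra.
Qed.

End Form.

Section MatrixAction.
Variable n : nat.

Lemma mulmv_sub (M : rmat n) (x y : rvec n) :
  mulmv n M (vsub n x y) = vsub n (mulmv n M x) (mulmv n M y).
Proof.
apply: functional_extensionality => i.
rewrite /mulmv /vsub.
rewrite -[X in _ - X]Rmult_1_l /Rminus Ropp_mult_distr_l -big_Rmultr.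
by rewrite -big_Rplus_split; apply: eq_bigr => j _; ring.
Qed.

Lemma mulmv1 (x : rvec n) : mulmv n (fun i j => if j == i then 1 else 0) x = x.
Proof.
apply: functional_extensionality => i; rewrite /mulmv.
rewrite (eq_bigr (fun j => if j == i then x j else 0)) -?big_mkcond ?big_pred1_eq //.
by move=> j _; case: (j == i); ring.
Qed.

End MatrixAction.

Section Isometry.
Variables r s : nat.
Local Notation n := (r + s)%N.
Local Notation V := (rvec n).
Local Notation form := (form r s).

Lemma id_is_isometry : is_isometry r s (fun x => x).
Proof.
exists (fun i j => if j == i then 1 else 0), (vzero n); split=> [x y|x].
  by rewrite !mulmv1.
by rewrite mulmv1; apply: functional_extensionality => i; rewrite /vadd /vzero; ring.
Qed.

(* For f = (I + A, v), [linpart f] is I + A. *)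
Definition linpart (f : V -> V) (x : V) : V := vsub n (f x) (f (vzero n)).

Lemma ApartE (f : V -> V) (x : V) : Apart r s f x = vsub n (linpart f x) x.
Proof. by []. Qed.

Definition disp (f : V -> V) (y : V) : V := vsub n (f y) y.

Variable f : V -> V.
Hypothesis f_iso : is_isometry r s f.

Lemma isometry_linpart :
  exists M : rmat n, (forall x y, form (mulmv n M x) (mulmv n M y) = form x y) /\
    forall x, linpart f x = mulmv n M x.
Proof.
have [M [v [M_iso fE]]] := f_iso; exists M; split=> // x.
have -> : mulmv n M x = mulmv n M (vsub n x (vzero n)).
  by congr (mulmv n M _); apply: functional_extensionality => i; rewrite /vsub /vzero; ring.
rewrite mulmv_sub /linpart !fE; apply: functional_extensionality => i.
by rewrite /vsub /vadd; ring.
Qed.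

Lemma isometry_sub (a b : V) : vsub n (f a) (f b) = linpart f (vsub n a b).
Proof.
have [M [_ linE]] := isometry_linpart.
rewrite linE mulmv_sub -!linE; apply: functional_extensionality => i.
by rewrite /linpart /vsub; ring.
Qed.

Lemma linpart_form (x y : V) : form (linpart f x) (linpart f y) = form x y.
Proof. by have [M [M_iso linE]] := isometry_linpart; rewrite !linE. Qed.

Lemma linpart_scal a (x : V) : linpart f (scal a x) = scal a (linpart f x).
Proof.
have [M [_ linE]] := isometry_linpart.
by rewrite !linE; apply: functional_extensionality => i; rewrite /mulmv /scal -big_Rmultr;
  apply: eq_bigr => j _; ring.
Qed.

Lemma linpart_sub (a b : V) :
  linpart f (vsub n a b) = vsub n (linpart f a) (linpart f b).
Proof.
rewrite -isometry_sub; apply: functional_extensionality => i.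
by rewrite /linpart /vsub; ring.
Qed.

Lemma linpart_add (x y : V) :
  linpart f (vadd n x y) = vadd n (linpart f x) (linpart f y).
Proof.
have xE : x = vsub n (vadd n x y) y.
  by apply: functional_extensionality => i; rewrite /vsub /vadd; ring.
rewrite [in RHS]xE linpart_sub; apply: functional_extensionality => i.
by rewrite /vsub /vadd; ring.
Qed.

Lemma disp_add (y w : V) : disp f (vadd n y w) = vadd n (disp f y) (Apart r s f w).
Proof.
have shift : vsub n (f (vadd n y w)) (f y) = linpart f w.
  rewrite isometry_sub; congr (linpart f _).
  by apply: functional_extensionality => i; rewrite /vsub /vadd; ring.
apply: functional_extensionality => i; have := f_equal (fun v => v i) shift.
by rewrite /disp /Apart /linpart /vsub /vadd => /= <-; ring.
Qed.

Lemma Apart_add (x y : V) :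
  Apart r s f (vadd n x y) = vadd n (Apart r s f x) (Apart r s f y).
Proof.
rewrite !ApartE linpart_add; apply: functional_extensionality => i.
by rewrite /vsub /vadd; ring.
Qed.

Lemma Apart_scal a (x : V) : Apart r s f (scal a x) = scal a (Apart r s f x).
Proof.
rewrite !ApartE linpart_scal; apply: functional_extensionality => i.
by rewrite /vsub /scal; ring.
Qed.

End Isometry.

Section CommutingIsometries.
Variables r s : nat.
Local Notation n := (r + s)%N.
Local Notation V := (rvec n).
Variables d g : V -> V.
Hypotheses (d_iso : is_isometry r s d) (g_iso : is_isometry r s g).
Hypothesis dg_comm : forall x, d (g x) = g (d x).

Lemma linpart_comm (x : V) : linpart d (linpart g x) = linpart g (linpart d x).
Proof. by rewrite -(isometry_sub d_iso) -(isometry_sub g_iso) !dg_comm. Qed.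

Lemma Apart_comm (x : V) : Apart r s d (Apart r s g x) = Apart r s g (Apart r s d x).
Proof.
rewrite !ApartE (linpart_sub d_iso) (linpart_sub g_iso) linpart_comm.
by apply: functional_extensionality => i; rewrite /vsub; ring.
Qed.

Lemma disp_conj (x : V) : disp d (g x) = linpart g (disp d x).
Proof. by rewrite /disp dg_comm (isometry_sub g_iso). Qed.

End CommutingIsometries.

Section NullDisplacements.
Variables r s : nat.
Local Notation n := (r + s)%N.
Local Notation V := (rvec n).
Local Notation form := (form r s).
Local Notation A := (Apart r s).
Variable Gamma : isoset r s.
Hypothesis Gamma_iso : forall f, Gamma f -> is_isometry r s f.
Hypothesis Apart_null :
  forall f h, Gamma f -> Gamma h -> forall z, form (A f z) (A h z) = 0.

Lemma Apart_polar f h (x y : V) : Gamma f -> Gamma h ->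
  form (A f x) (A h y) + form (A f y) (A h x) = 0.
Proof.
move=> Gf Gh; have := Apart_null Gf Gh (vadd n x y).
rewrite (Apart_add (Gamma_iso Gf)) (Apart_add (Gamma_iso Gh)).
have := Apart_null Gf Gh x; have := Apart_null Gf Gh y.
move: (A f x) (A f y) (A h x) (A h y) => a b c e.
by rewrite !form_addl !form_addr; lra.
Qed.

Lemma Apart_isotropic f (x y : V) : Gamma f -> form (A f x) (A f y) = 0.
Proof. by move=> Gf; have := Apart_polar x y Gf Gf; rewrite (form_sym (A f y)); lra. Qed.

Lemma Apart_skew f (x y : V) : Gamma f -> form (A f x) y = - form x (A f y).
Proof.
move=> Gf; have := linpart_form (Gamma_iso Gf) x y.
have linE w : linpart f w = vadd n (A f w) w.
  by apply: functional_extensionality => i; rewrite /vadd /Apart /linpart /vsub; ring.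
rewrite !linE; have := Apart_isotropic x y Gf.
by move: (A f x) (A f y) => a b; rewrite !form_addl !form_addr; lra.
Qed.

Lemma Apart_comm_perp d g (x y : V) : Gamma d -> Gamma g ->
  (forall z, d (g z) = g (d z)) -> form (A d x) (A g y) = 0.
Proof.
move=> Gd Gg dg_comm.
have AgAd0 : A g (A d x) = vzero n.
  apply: form_nondegenerate => w.
  have := Apart_polar x w Gg Gd; have := Apart_skew w (A d x) Gg.
  have := Apart_skew w (A g x) Gd.
  rewrite (Apart_comm (Gamma_iso Gd) (Gamma_iso Gg) dg_comm) (form_sym (A g x)); lra.
by rewrite form_sym Apart_skew // AgAd0 form0r; lra.
Qed.

End NullDisplacements.

Section DisplacementAlongLines.
Variables r s : nat.
Local Notation n := (r + s)%N.
Local Notation V := (rvec n).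
Local Notation form := (form r s).
Local Notation A := (Apart r s).
Variables f h : V -> V.
Hypotheses (f_iso : is_isometry r s f) (h_iso : is_isometry r s h).

Lemma disp_form_line (y z : V) t :
  form (disp f (vadd n y (scal t z))) (disp h (vadd n y (scal t z))) =
  form (disp f y) (disp h y) + t * (form (disp f y) (A h z) + form (A f z) (disp h y))
  + t * t * form (A f z) (A h z).
Proof.
rewrite (disp_add f_iso) (disp_add h_iso) (Apart_scal f_iso) (Apart_scal h_iso).
move: (disp f y) (disp h y) (A f z) (A h z) => a b c e.
by rewrite !form_addl !form_addr !form_scall !form_scalr; ring.
Qed.

(* For t = eps / (|z|^2 + 1) both x0 + t z and x0 - t z lie in the ball, where
   the quadratic of [disp_form_line] equals its constant term; adding the two
   equations leaves 2 t^2 <A_f z, A_h z> = 0. *)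
Lemma Apart_null_of_locally_const (x0 : V) eps :
  0 < eps ->
  (forall y, \big[Rplus/0]_(i < n) ((y i - x0 i) * (y i - x0 i)) < eps * eps ->
     form (disp f y) (disp h y) = form (disp f x0) (disp h x0)) ->
  forall z, form (A f z) (A h z) = 0.
Proof.
move=> eps_gt0 loc_const z.
set N := \big[Rplus/0]_(i < n) (z i * z i).
have N_ge0 : 0 <= N by apply: big_Rplus_ge0 => i; nra.
set t := eps / (N + 1).
have t_gt0 : 0 < t by apply: Rdiv_lt_0_compat; lra.
have tN : t * (N + 1) = eps by rewrite /t; field; lra.
have on_line u : u * u = t * t ->
    form (disp f (vadd n x0 (scal u z))) (disp h (vadd n x0 (scal u z))) =
    form (disp f x0) (disp h x0).
  move=> uu; apply: loc_const.
  rewrite (eq_bigr (fun i => u * u * (z i * z i))) ?big_Rmultr -/N; last first.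
    by move=> i _; rewrite /vadd /scal; ring.
  by rewrite uu; nra.
have := on_line t erefl; have := on_line (- t) ltac:(ring).
rewrite !disp_form_line => Em Ep.
have : 2 * (t * t) * form (A f z) (A h z) = 0 by nra.
by case/Rmult_integral => //; nra.
Qed.

End DisplacementAlongLines.

Lemma open_centralizer_orbit_Apart_null r s (Gamma : isoset r s) (x0 : rvec (r + s)) :
  (forall f, Gamma f -> is_isometry r s f) ->
  is_open_set (r + s) (iso_orbit r s (iso_centralizer r s Gamma) x0) ->
  forall f h, Gamma f -> Gamma h -> forall z, form r s (Apart r s f z) (Apart r s h z) = 0.
Proof.
move=> Gamma_iso orbit_open f h Gf Gh.
have x0_orbit : iso_orbit r s (iso_centralizer r s Gamma) x0 x0.
  by exists (fun x => x); do !split; exact: id_is_isometry.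
have [eps [eps_gt0 ball_orbit]] := orbit_open x0 x0_orbit.
apply: (Apart_null_of_locally_const (Gamma_iso f Gf) (Gamma_iso h Gh) eps_gt0).
move=> y /ball_orbit [g [[g_iso g_comm] ->]].
rewrite (disp_conj g_iso (fun x => esym (g_comm f Gf x))).
rewrite (disp_conj g_iso (fun x => esym (g_comm h Gh x))).
exact: linpart_form.
Qed.

Lemma inU_perp r s (L1 L2 : isoset r s) :
  (forall f g x y, L1 f -> L2 g -> form r s (Apart r s f x) (Apart r s g y) = 0) ->
  form_perp r s (inU r s L1) (inU r s L2).
Proof.
move=> Apart_perp u v Lu Lv.
elim: Lu => [|u' f x _ IHu L1f]; first exact: form0l.
rewrite form_addl IHu Rplus_0_l.
elim: Lv => [|v' g y _ IHv L2g]; first exact: form0r.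
by rewrite form_addr IHv Apart_perp // Rplus_0_l.
Qed.

Theorem lemma4p1 (r s : nat) (Gamma : isoset r s) :
  is_subgroup r s Gamma ->
  (exists x0 : rvec (r + s), is_open_set (r + s) (iso_orbit r s (iso_centralizer r s Gamma) x0)) ->
  form_perp r s (inU r s (iso_center r s Gamma)) (inU r s Gamma).
Proof.
move=> [Gamma_iso _] [x0 orbit_open].
have Apart_null := open_centralizer_orbit_Apart_null Gamma_iso orbit_open.
apply: inU_perp => d g x y [Gd d_central] Gg.
exact: (Apart_comm_perp Gamma_iso Apart_null x y Gd Gg (d_central g Gg)).
Qed.
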